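(* Let $\mathbb{X}$ be a set, $E\subset\mathbb{R}^{\mathbb{X}}$ a real vector subspace, $C=(E\cap[0,\infty)^{\mathbb{X}})\setminus\{0\}$, and $\Pi:E\to E/\mathcal{R}$ the canonical projection, where $f\mathcal{R}g$ iff $f=bg$ for some $b>0$. For $\bar f,\bar g\in\Pi(C)$ set $d(\bar f,\bar g)=\frac{1-m(f,g)}{1+m(f,g)}$ where $f\in\bar f$, $g\in\bar g$. Then $d$ is well defined (independent of the choice of $f\in\bar f,g\in\bar g$), is a distance on $\Pi(C)$, and satisfies $d\le 1$.
   Context: The order on $\mathbb{R}^{\mathbb{X}}$ is pointwise. For $f,g\in C$, $\aleph(f,g)=\sup\{b\ge0\mid bf\le g\}$ and $m(f,g)=\aleph(f,g)\aleph(g,f)$. *)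

From mathcomp Require Import all_boot all_order all_algebra.
From mathcomp Require Import all_classical all_reals.
Set Implicit Arguments. Unset Strict Implicit. Unset Printing Implicit Defensive.
Import Order.TTheory GRing.Theory Num.Theory.
Local Open Scope classical_set_scope.
Local Open Scope ring_scope.

Section Defs.
Variables (R : realType) (X : Type).

Definition is_subspace (E : set (X -> R)) : Prop :=
  E (fun _ => 0) /\
  (forall f g, E f -> E g -> E (fun x => f x + g x)) /\
  (forall (a : R) f, E f -> E (fun x => a * f x)).

Definition inC (E : set (X -> R)) (f : X -> R) : Prop :=
  E f /\ (forall x, 0 <= f x) /\ f <> (fun _ => 0).

Definition relR (f g : X -> R) : Prop :=
  exists b : R, 0 < b /\ f = (fun x => b * g x).

Definition aleph (f g : X -> R) : R :=
  sup [set b : R | 0 <= b /\ forall x, b * f x <= g x].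

Definition mfg (f g : X -> R) : R := aleph f g * aleph g f.

(* d evaluated on representatives f, g *)
Definition dC (f g : X -> R) : R := (1 - mfg f g) / (1 + mfg f g).

End Defs.

(** Writing [m(f, g) = exp (-2 δ(f, g))], the quantity [d] is [tanh δ].
    The ratios compose, [aleph f g * aleph g h <= aleph f h], so [m] is
    supermultiplicative and [δ] satisfies the triangle inequality; as [tanh]
    is increasing and subadditive on [0, +oo), so does [d].  Scaling [f] and
    [g] by [b, c > 0] multiplies [aleph f g] by [c / b] and [aleph g f] by
    [b / c], leaving [m] unchanged; and [m(f, g) = 1] forces [f] and [g] to be
    proportional, the factor being [aleph g f]. *)

From mathcomp Require Import all_boot all_order all_algebra.
From mathcomp Require Import all_classical all_reals.
From mathcomp Require Import ring lra.
Import Order.TTheory GRing.Theory Num.Theory.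
Local Open Scope ring_scope.

Set Implicit Arguments. Unset Strict Implicit.

Section Cayley.
Variable R : realFieldType.
Implicit Types x y z : R.

Definition cayley x : R := (1 - x) / (1 + x).

Lemma cayley_ge0 x : 0 <= x <= 1 -> 0 <= cayley x.
Proof. by case/andP=> x0 x1; rewrite divr_ge0 ?subr_ge0 ?addr_ge0. Qed.

Lemma cayley_le1 x : 0 <= x -> cayley x <= 1.
Proof. by move=> x0; rewrite ler_pdivrMr ?ltr_wpDr // mul1r; lra. Qed.

Lemma cayley_eq0 x : 0 <= x -> (cayley x = 0 <-> x = 1).
Proof.
move=> x0; rewrite /cayley; split=> [/eqP|->]; last by rewrite subrr mul0r.
rewrite mulf_eq0 invr_eq0 (gt_eqF (ltr_wpDr x0 ltr01)) orbF subr_eq0.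
by move=> /eqP.
Qed.

Lemma cayley_le x y : 0 <= x <= y -> cayley y <= cayley x.
Proof.
case/andP=> x0 xy; have y0 := le_trans x0 xy.
rewrite ler_pdivrMr ?ltr_wpDr // mulrAC ler_pdivlMr ?ltr_wpDr //; nra.
Qed.

(* [cayley (exp (-2 s)) = tanh s], so this is the subadditivity of [tanh]. *)
Lemma cayley_mul_le x y : 0 <= x <= 1 -> 0 <= y <= 1 ->
  cayley (x * y) <= cayley x + cayley y.
Proof.
move=> /andP[x0 x1] /andP[y0 y1]; have xy0 : 0 <= x * y by rewrite mulr_ge0.
rewrite /cayley ler_pdivrMr ?ltr_wpDr //.
have -> : ((1 - x) / (1 + x) + (1 - y) / (1 + y)) * (1 + x * y) =
    ((1 - x) * (1 + y) + (1 - y) * (1 + x)) * (1 + x * y) / ((1 + x) * (1 + y)).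
  by field; rewrite !gt_eqF ?ltr_wpDr.
rewrite ler_pdivlMr ?mulr_gt0 ?ltr_wpDr //.
have : 0 <= (1 - x * y) * (1 - x) * (1 - y).
  by rewrite !mulr_ge0 // subr_ge0 // mulr_ile1.
nra.
Qed.

Lemma cayley_triangle x y z : 0 <= x <= 1 -> 0 <= y <= 1 -> x * y <= z ->
  cayley z <= cayley x + cayley y.
Proof.
move=> /[dup] /andP[x0 _] hx /[dup] /andP[y0 _] hy xyz.
apply: le_trans (cayley_mul_le hx hy).
by apply: cayley_le; rewrite mulr_ge0.
Qed.

End Cayley.

Section Aleph.
Variables (R : realType) (X : Type).
Implicit Types f g h : X -> R.

Definition nonneg_nonzero f := (forall x, 0 <= f x) /\ exists x, 0 < f x.

Lemma inC_nonneg_nonzero E f : inC E f -> nonneg_nonzero f.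
Proof.
case=> _ [f0 fn0]; split=> //; apply: contrapT => f_npos; apply: fn0.
apply: funext => x; apply/eqP; rewrite eq_le f0 andbT leNgt.
by apply/negP => fx; apply: f_npos; exists x.
Qed.

Lemma nonneg_nonzeroZ b f : 0 < b -> nonneg_nonzero f ->
  nonneg_nonzero (fun x => b * f x).
Proof.
move=> b0 [f0 [x fx]]; split=> [y|]; first by rewrite mulr_ge0 // ltW.
by exists x; rewrite mulr_gt0.
Qed.

Lemma aleph_mul_le f g x : (forall y, 0 <= f y) -> (forall y, 0 <= g y) ->
  aleph f g * f x <= g x.
Proof.
move=> f0 g0; have [->|fx] := eqVneq (f x) 0; first by rewrite mulr0.
have {fx} fx : 0 < f x by rewrite lt0r fx f0.
rewrite -ler_pdivlMr //; apply: ge_sup.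
  by exists 0; split=> // y; rewrite mul0r.
by move=> b [_ bfg]; rewrite ler_pdivlMr.
Qed.

Lemma le_aleph f g b : (exists x, 0 < f x) ->
  0 <= b -> (forall x, b * f x <= g x) -> b <= aleph f g.
Proof.
move=> [x0 fx0] b0 bfg; apply: ub_le_sup; last by split.
by exists (g x0 / f x0) => a [_ afg]; rewrite ler_pdivlMr.
Qed.

Lemma aleph_ge0 f g : (exists x, 0 < f x) -> (forall x, 0 <= g x) ->
  0 <= aleph f g.
Proof. by move=> fn0 g0; apply: le_aleph => // x; rewrite mul0r. Qed.

Lemma aleph_trans f g h : nonneg_nonzero f -> nonneg_nonzero g ->
  (forall x, 0 <= h x) -> aleph f g * aleph g h <= aleph f h.
Proof.
move=> [f0 fn0] [g0 gn0] h0.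
apply: le_aleph; rewrite ?mulr_ge0 ?aleph_ge0 // => x.
rewrite mulrAC mulrC; apply: le_trans (aleph_mul_le x g0 h0).
by apply: ler_wpM2l; [exact: aleph_ge0 | exact: aleph_mul_le].
Qed.

Lemma aleph_id f : nonneg_nonzero f -> aleph f f = 1.
Proof.
move=> [f0 [x fx]]; apply/le_anti/andP; split.
  by rewrite -(ler_pM2r fx) mul1r aleph_mul_le.
by apply: le_aleph; [exists x | | move=> y; rewrite mul1r].
Qed.

Lemma alephZ f g b c : nonneg_nonzero f -> nonneg_nonzero g -> 0 < b -> 0 < c ->
  aleph (fun x => b * f x) (fun x => c * g x) = c / b * aleph f g.
Proof.
move=> nf ng b0 c0; have [bf0 bfn0] := nonneg_nonzeroZ b0 nf.
have [cg0 _] := nonneg_nonzeroZ c0 ng; case: nf ng => [f0 fn0] [g0 _].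
have cb0 : 0 < c / b by rewrite divr_gt0.
apply/le_anti/andP; split.
  rewrite -ler_pdivrMl // invf_div; apply: le_aleph => [//||x].
    by rewrite mulr_ge0 ?aleph_ge0 // ltW // divr_gt0.
  set A := aleph _ _; rewrite (_ : _ * f x = A * (b * f x) / c).
    by rewrite ler_pdivrMr // (mulrC (g x)); apply: aleph_mul_le.
  by field; rewrite gt_eqF.
apply: le_aleph => [//||x]; first exact: mulr_ge0 (ltW cb0) (aleph_ge0 fn0 g0).
rewrite (_ : _ * (b * f x) = c * (aleph f g * f x)).
  by rewrite ler_pM2l // aleph_mul_le.
by field; rewrite gt_eqF.
Qed.

Lemma mfgC f g : mfg f g = mfg g f.
Proof. exact: mulrC. Qed.

Lemma mfg_ge0 f g : nonneg_nonzero f -> nonneg_nonzero g -> 0 <= mfg f g.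
Proof. by move=> [f0 fn0] [g0 gn0]; rewrite mulr_ge0 ?aleph_ge0. Qed.

Lemma mfg_le1 f g : nonneg_nonzero f -> nonneg_nonzero g -> mfg f g <= 1.
Proof. by move=> nf [g0 gn0]; rewrite -(aleph_id nf) aleph_trans //; case: nf. Qed.

Lemma mfgZ f g b c : nonneg_nonzero f -> nonneg_nonzero g -> 0 < b -> 0 < c ->
  mfg (fun x => b * f x) (fun x => c * g x) = mfg f g.
Proof.
move=> nf ng b0 c0; rewrite /mfg !alephZ //.
by field; rewrite !gt_eqF.
Qed.

Lemma mfg_trans f g h :
  nonneg_nonzero f -> nonneg_nonzero g -> nonneg_nonzero h ->
  mfg f g * mfg g h <= mfg f h.
Proof.
move=> nf ng nh; case: (nf) (ng) (nh) => [f0 fn0] [g0 gn0] [h0 hn0].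
rewrite /mfg mulrACA [aleph g f * _]mulrC.
by apply: ler_pM; rewrite ?mulr_ge0 ?aleph_ge0 ?aleph_trans.
Qed.

Lemma mfg_eq1 f g : nonneg_nonzero f -> nonneg_nonzero g ->
  mfg f g = 1 <-> relR f g.
Proof.
move=> nf ng; case: (nf) (ng) => [f0 fn0] [g0 gn0]; split=> [mfg1|].
  have a_gt0 : 0 < aleph g f.
    rewrite lt0r aleph_ge0 // andbT; apply/eqP => a0.
    by move: mfg1; rewrite /mfg a0 mulr0 => /eqP; rewrite eq_sym oner_eq0.
  exists (aleph g f); split=> //; apply: funext => x.
  apply/le_anti; rewrite aleph_mul_le // andbT -[f x]mul1r -mfg1 /mfg mulrAC mulrC.
  by rewrite ler_pM2l // aleph_mul_le.
case=> b [b0 ->]; have g1 : g = (fun x => 1 * g x) by apply: funext => x; rewrite mul1r.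
by rewrite [in X in mfg _ X]g1 mfgZ // /mfg aleph_id ?mulr1.
Qed.

End Aleph.

Theorem mainTheorem2 (R : realType) (X : Type) (E : set (X -> R)) :
  is_subspace E ->
  (* well defined on classes *)
  (forall f f' g g', inC E f -> inC E f' -> inC E g -> inC E g' ->
     relR f f' -> relR g g' -> dC f g = dC f' g') /\
  (* nonnegativity and the bound d <= 1 *)
  (forall f g, inC E f -> inC E g -> 0 <= dC f g /\ dC f g <= 1) /\
  (* identity of indiscernibles on Pi(C) *)
  (forall f g, inC E f -> inC E g -> (dC f g = 0 <-> relR f g)) /\
  (* symmetry *)
  (forall f g, inC E f -> inC E g -> dC f g = dC g f) /\
  (* triangle inequality *)
  (forall f g h, inC E f -> inC E g -> inC E h ->
     dC f h <= dC f g + dC g h).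
Proof.
have dCE f g : dC f g = cayley (mfg f g) by [].
have mfg_01 f g : nonneg_nonzero f -> nonneg_nonzero g -> 0 <= mfg f g <= 1.
  by move=> nf ng; rewrite mfg_ge0 ?mfg_le1.
move=> _; split.
  move=> f f' g g' _ /inC_nonneg_nonzero nf' _ /inC_nonneg_nonzero ng'.
  by move=> [b [b0 ->]] [c [c0 ->]]; rewrite !dCE mfgZ.
split=> [f g /inC_nonneg_nonzero nf /inC_nonneg_nonzero ng|].
  by rewrite dCE cayley_ge0 ?cayley_le1 ?mfg_01 ?mfg_ge0.
split=> [f g /inC_nonneg_nonzero nf /inC_nonneg_nonzero ng|].
  by rewrite dCE cayley_eq0 ?mfg_ge0 ?mfg_eq1.
split=> [f g _ _|f g h]; first by rewrite !dCE mfgC.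
move=> /inC_nonneg_nonzero nf /inC_nonneg_nonzero ng /inC_nonneg_nonzero nh.
by rewrite !dCE cayley_triangle ?mfg_01 ?mfg_trans.
Qed.
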